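(* Let $T$ be a tree with colour classes $F_1$ and $F_2$. Let $R\subseteq F_1$ with $|R|\le 2$ such that, if $|R|=2$, the two vertices of $R$ have no common neighbour in $T$. Let $\varepsilon>0$ and $\alpha>2\varepsilon$. Let $G$ be a graph and let $(X,Y)$ be an $\varepsilon$-regular pair in $G$ with density $d(X,Y)>3\alpha$, such that $|F_1|\le\varepsilon|X|$ and $|F_2|\le \varepsilon|Y|$. Let $X'\subseteq X$ and $Y'\subseteq Y$ satisfy $|X'|>2\frac{\varepsilon}{\alpha}|X|$ and $|Y'|>2\frac{\varepsilon}{\alpha}|Y|$. Let $\varphi$ be any injective map from $R$ into the set of vertices of $X'$ having more than $3\varepsilon|Y|$ neighbours in $Y'$. Then $\varphi$ can be extended to an injective map $\varphi:V(T)\to X\cup Y$ which maps every edge of $T$ to an edge of $G$ and satisfies $\varphi(F_1)\subseteq X'$ and $\varphi(F_2)\subseteq Y'$.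
   Context: For disjoint vertex sets $X,Y$ of a graph $G$, $E(X,Y)$ is the set of edges with one end in $X$ and the other in $Y$, and the density is $d(X,Y)=\frac{|E(X,Y)|}{|X||Y|}$. The pair $(X,Y)$ is $\varepsilon$-regular if for all $X'\subseteq X$, $Y'\subseteq Y$ with $|X'|\ge\varepsilon|X|$ and $|Y'|\ge \varepsilon|Y|$ we have $|d(X',Y')-d(X,Y)|\le\varepsilon$. *)

From mathcomp Require Import all_boot all_order all_algebra.
Set Implicit Arguments. Unset Strict Implicit. Unset Printing Implicit Defensive.
Import Order.TTheory GRing.Theory Num.Theory.
Local Open Scope ring_scope.

Definition simple_graph (V : finType) (e : rel V) : Prop :=
  symmetric e /\ irreflexive e.

Definition connected_graph (V : finType) (e : rel V) : Prop :=
  forall x y : V, connect e x y.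

Definition acyclic_graph (V : finType) (e : rel V) : Prop :=
  forall s : seq V, uniq s -> (3 <= size s)%N -> ~~ cycle e s.

Definition is_tree (V : finType) (e : rel V) : Prop :=
  [/\ simple_graph e, (0 < #|V|)%N, connected_graph e & acyclic_graph e].

Definition colour_classes (V : finType) (e : rel V) (F1 F2 : {set V}) : Prop :=
  [/\ F1 :&: F2 = set0, F1 :|: F2 = [set: V] &
      forall u v, e u v -> (u \in F1) && (v \in F2) || (u \in F2) && (v \in F1)].

(* |E(A,B)| : number of edges with one end in A and the other in B
   (A, B are disjoint in all uses). *)
Definition n_edges (V : finType) (e : rel V) (A B : {set V}) : nat :=
  #|[set p : V * V | (p.1 \in A) && (p.2 \in B) && e p.1 p.2]|.

Definition density (R : realFieldType) (V : finType) (e : rel V) (A B : {set V}) : R :=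
  (n_edges e A B)%:R / (#|A| * #|B|)%:R.

Definition eps_regular (R : realFieldType) (V : finType) (e : rel V) (eps : R)
    (X Y : {set V}) : Prop :=
  forall X' Y' : {set V}, X' \subset X -> Y' \subset Y ->
    eps * #|X|%:R <= #|X'|%:R -> eps * #|Y|%:R <= #|Y'|%:R ->
    `|density R e X' Y' - density R e X Y| <= eps.

(* The tree is embedded greedily along a growing subtree, the colour class F1
   into X' and F2 into Y', using only "rich" images: vertices of X' with more
   than 3 eps |Y| neighbours in Y', and symmetrically.  By regularity fewer than
   eps |X| vertices of X' are poor, and the images already used on a side number
   fewer than |F1| <= eps |X|; so a vertex whose tree neighbour is embedded at a
   rich vertex always finds a free rich image among that vertex's neighbours.
   With two reserved vertices r1, r2 (whose images are prescribed), grow from r1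
   avoiding the vertices at distance at most 2 from r2.  When the subtree first
   reaches one of them, at a vertex q with a path q - p - r2, the image of q is
   chosen with a neighbour in the set C of free rich neighbours of phi r2, which
   has at least eps |Y| elements; regularity again leaves fewer than eps |X|
   vertices of X without a neighbour in C. *)

From mathcomp Require Import all_boot all_order all_algebra.
From mathcomp Require Import lra.
Set Implicit Arguments. Unset Strict Implicit. Unset Printing Implicit Defensive.
Import Order.TTheory GRing.Theory Num.Theory.
Local Open Scope ring_scope.

Definition nbrs (V : finType) (e : rel V) (B : {set V}) (x : V) : {set V} :=
  [set y in B | e x y].

Definition low_degree (R : realFieldType) (V : finType) (e : rel V)
    (A B : {set V}) (c : R) : {set V} :=
  [set x in A | #|nbrs e B x|%:R <= c].

Section EdgeCount.
Variables (V : finType) (e : rel V).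

Lemma n_edgesE (A B : {set V}) :
  n_edges e A B = (\sum_(x in A) #|nbrs e B x|)%N.
Proof.
rewrite /n_edges; transitivity (\sum_(x in A) \sum_(y in B | e x y) 1)%N.
  rewrite pair_big_dep /= -sum1_card; apply: eq_bigl => -[x y] /=.
  by rewrite inE andbA.
by apply: eq_bigr => x _; rewrite sum1_card; apply: eq_card => y; rewrite inE.
Qed.

Lemma n_edges_le (A B : {set V}) : (n_edges e A B <= #|A| * #|B|)%N.
Proof.
rewrite /n_edges -cardsX; apply: subset_leq_card; apply/subsetP => -[x y].
by rewrite !inE /= => /andP[/andP[-> ->] _].
Qed.

Lemma n_edgesC (A B : {set V}) : symmetric e -> n_edges e A B = n_edges e B A.
Proof.
move=> se; rewrite /n_edges -(card_imset _ (can_inj (@swap_pairK V V))).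
apply: eq_card => -[x y]; rewrite inE.
apply/imsetP/idP => [[[a b]] | /andP[/andP[xB yA] exy]]; rewrite ?inE /=.
  by move=> /andP[/andP[aA bB] eab] [-> ->]; rewrite aA bB se.
by exists (y, x); rewrite // inE /= yA xB se.
Qed.

Variable R : realFieldType.

Lemma density_le1 (A B : {set V}) : density R e A B <= 1.
Proof.
rewrite /density; have [->|AB_neq0] := eqVneq (#|A| * #|B|)%N 0%N.
  by rewrite invr0 mulr0 ler01.
by rewrite ler_pdivrMr ?mul1r ?ler_nat ?n_edges_le // ltr0n lt0n.
Qed.

Lemma densityC (A B : {set V}) :
  symmetric e -> density R e A B = density R e B A.
Proof. by move=> se; rewrite /density n_edgesC // mulnC. Qed.

Lemma eps_regular_sym (eps : R) (X Y : {set V}) :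
  symmetric e -> eps_regular e eps X Y -> eps_regular e eps Y X.
Proof.
move=> se reg Y1 X1 sY1 sX1 hY1 hX1.
by rewrite densityC // [density R e Y X]densityC //; apply: reg.
Qed.

End EdgeCount.

Lemma ratio_threshold_lt (R : realFieldType) (eps alpha d n m : R) :
  0 < eps -> 2 * eps < alpha -> 3 * alpha < d -> 0 <= n ->
  2 * (eps / alpha) * n < m -> 3 * eps * n < (d - eps) * m.
Proof.
move=> eps_gt0 alpha_gt d_gt n_ge0 m_gt.
have alpha_gt0 : 0 < alpha by lra.
have d_eps_gt0 : 0 < d - eps by lra.
have ratio_ge : 3 * eps <= (d - eps) * (2 * (eps / alpha)).
  have k_gt0 : 0 < eps / alpha by rewrite divr_gt0.
  have k_alpha : eps / alpha * alpha = eps by rewrite divfK ?gt_eqF.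
  have : 0 < eps / alpha * (2 * d - 2 * eps - 3 * alpha) by rewrite mulr_gt0 //; lra.
  nra.
apply: le_lt_trans (_ : (d - eps) * (2 * (eps / alpha) * n) < _).
  by rewrite mulrA ler_wpM2r.
by rewrite ltr_pM2l.
Qed.

Lemma eps_mul_lt_of_ratio (R : realFieldType) (eps alpha n m : R) :
  0 < eps -> 0 < alpha <= 2 -> 0 <= n -> 2 * (eps / alpha) * n < m -> eps * n < m.
Proof.
move=> eps_gt0 /andP[alpha_gt0 alpha_le2] n_ge0; apply: le_lt_trans.
by rewrite ler_wpM2r // mulrA ler_pdivlMr // mulrC ler_pM2r.
Qed.

Section RegularPair.
Variables (R : realFieldType) (V : finType) (e : rel V) (X Y : {set V}) (eps : R).
Hypotheses (eps_gt0 : 0 < eps) (reg : eps_regular e eps X Y).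
Local Notation d := (density R e X Y).

Lemma regular_n_edges_ge (A B : {set V}) :
  A \subset X -> B \subset Y ->
  eps * #|X|%:R <= #|A|%:R -> eps * #|Y|%:R <= #|B|%:R ->
  (d - eps) * (#|A| * #|B|)%:R <= (n_edges e A B)%:R.
Proof.
move=> sAX sBY hA hB; have [->|AB_neq0] := eqVneq (#|A| * #|B|)%N 0%N.
  by rewrite mulr0 ler0n.
have : d - eps <= density R e A B.
  by have := reg sAX sBY hA hB; rewrite ler_norml => /andP[lb _]; lra.
by rewrite /density ler_pdivlMr // ltr0n lt0n.
Qed.

(* Vertices of A with few neighbours in a large B span too few edges with B
   to form an eps-large subset of X. *)
Lemma card_low_degree_lt (A B : {set V}) (c : R) :
  (0 < #|X|)%N -> A \subset X -> B \subset Y -> eps * #|Y|%:R <= #|B|%:R ->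
  c < (d - eps) * #|B|%:R -> #|low_degree e A B c|%:R < eps * #|X|%:R.
Proof.
move=> X_gt0 sAX sBY hB c_lt; set L := low_degree e A B c.
rewrite real_ltNge ?num_real //; apply/negP => hL.
have L_gt0 : 0 < #|L|%:R :> R by apply: lt_le_trans hL; rewrite mulr_gt0 ?ltr0n.
have sLX : L \subset X.
  by apply: subset_trans sAX; apply/subsetP => x; rewrite inE => /andP[].
have deg_le x : x \in L -> #|nbrs e B x|%:R <= c by rewrite inE => /andP[].
have : (d - eps) * (#|L| * #|B|)%:R <= c * #|L|%:R.
  apply: le_trans (regular_n_edges_ge sLX sBY hL hB) _.
  rewrite n_edgesE natr_sum mulr_natr -sumr_const; exact: ler_sum.
by rewrite natrM mulrCA [c * _]mulrC ler_pM2l // leNgt c_lt.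
Qed.

Lemma card_low_degree_dense_lt (X' Y' : {set V}) (alpha : R) :
  2 * eps < alpha -> 3 * alpha < d -> (0 < #|X|)%N -> X' \subset X -> Y' \subset Y ->
  2 * (eps / alpha) * #|Y|%:R < #|Y'|%:R ->
  #|low_degree e X' Y' (3 * eps * #|Y|%:R)|%:R < eps * #|X|%:R.
Proof.
move=> alpha_gt d_gt X_gt0 sX'X sY'Y Y'_big.
have d_le1 : d <= 1 := density_le1 _ _ _ _.
have alpha_gt0 : 0 < alpha by apply: lt_trans alpha_gt; rewrite mulr_gt0.
have alpha_bounds : 0 < alpha <= 2 by rewrite alpha_gt0 /=; lra.
apply: card_low_degree_lt X_gt0 sX'X sY'Y _ _.
  exact/ltW/(eps_mul_lt_of_ratio eps_gt0 alpha_bounds (ler0n _ _) Y'_big).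
exact: ratio_threshold_lt eps_gt0 alpha_gt d_gt (ler0n _ _) Y'_big.
Qed.

Lemma card_isolated_lt (C : {set V}) :
  (0 < #|X|)%N -> (0 < #|Y|)%N -> eps < d -> C \subset Y -> eps * #|Y|%:R <= #|C|%:R ->
  #|low_degree e X C (0 : R)|%:R < eps * #|X|%:R.
Proof.
move=> X_gt0 Y_gt0 d_gt sCY C_big; apply: card_low_degree_lt => //.
rewrite mulr_gt0 ?subr_gt0 //; apply: lt_le_trans C_big.
by rewrite mulr_gt0 ?ltr0n.
Qed.

End RegularPair.

Lemma imset_with_subset (aT rT : finType) (f : aT -> rT) v z (A : {set aT}) :
  [eta f with v |-> z] @: (v |: A) \subset z |: f @: A.
Proof.
apply/subsetP => _ /imsetP[x /setU1P[-> | xA] ->] /=; first by rewrite eqxx setU11.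
by case: eqP => _; rewrite !inE ?eqxx ?imset_f ?orbT.
Qed.

Section Counting.
Variables (R : realFieldType) (T : finType).
Implicit Types (A B N : {set T}).

Lemma card_setU_lt A B (a b : R) :
  #|A|%:R < a -> #|B|%:R < b -> #|A :|: B|%:R < a + b.
Proof.
move=> hA hB; apply: le_lt_trans (ltrD hA hB).
by rewrite -natrD ler_nat leq_card_setU.
Qed.

Lemma card_setD_gt N A (a s : R) :
  #|A|%:R < a -> a + s <= #|N|%:R -> s < #|N :\: A|%:R.
Proof.
move=> hA hN; have : #|N|%:R <= #|A|%:R + #|N :\: A|%:R :> R.
  by rewrite -natrD ler_nat -{1}(cardsID A N) leq_add2r subset_leq_card ?subsetIr.
lra.
Qed.

Lemma exists_setD N A :
  #|A|%:R < #|N|%:R :> R -> exists2 y, y \in N & y \notin A.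
Proof.
rewrite ltr_nat => lt_AN; apply/subsetPn; apply: contraTN lt_AN.
by move/subset_leq_card; rewrite leqNgt.
Qed.

Lemma card_gt0_of_lt A B (c : R) :
  0 <= c -> A \subset B -> c * #|B|%:R < #|A|%:R -> (0 < #|B|)%N.
Proof.
move=> c_ge0 sAB lt_A; apply: leq_trans (subset_leq_card sAB).
by rewrite -(ltr0n R); apply: le_lt_trans lt_A; rewrite mulr_ge0.
Qed.

Lemma card_setCU1_lt (S : {set T}) v : v \notin S -> (#|~: (v |: S)| < #|~: S|)%N.
Proof. by move=> vS; rewrite setCU setIC -setDE (cardsD1 v (~: S)) !inE vS. Qed.

End Counting.

Section TreeGrowth.
Variables (T : finType) (eT : rel T).
Hypotheses (symT : symmetric eT) (acycT : acyclic_graph eT).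
Implicit Types (S : {set T}).

Definition induced (S : {set T}) : rel T :=
  [rel a b | [&& a \in S, b \in S & eT a b]].

Definition connected_in (S : {set T}) : Prop :=
  {in S &, forall a b, connect (induced S) a b}.

Lemma connected_in1 x : connected_in [set x].
Proof. by move=> a b /set1P-> /set1P->; apply: connect0. Qed.

Lemma connected_inU1 S u v :
  connected_in S -> u \in S -> eT u v -> connected_in (v |: S).
Proof.
move=> conS uS euv.
have in_S a b : a \in S -> b \in S -> connect (induced (v |: S)) a b.
  move=> aS bS; apply: connect_sub (conS a b aS bS) => x y /and3P[xS yS exy].
  by apply: connect1; rewrite /induced /= !inE xS yS exy !orbT.
have uv : connect (induced (v |: S)) u v by apply: connect1; rewrite /induced /= !inE uS eqxx orbT.
have vu : connect (induced (v |: S)) v u.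
  by apply: connect1; rewrite /induced /= !inE uS eqxx orbT symT.
move=> a b /setU1P[->|aS] /setU1P[->|bS].
- exact: connect0.
- exact: connect_trans vu (in_S _ _ uS bS).
- exact: connect_trans (in_S _ _ aS uS) uv.
- exact: in_S.
Qed.

Lemma path_induced_all S x p : path (induced S) x p -> all (mem S) p.
Proof.
elim: p x => //= y p IH x /andP[/and3P[_ yS _] yp].
by rewrite [y \in _]yS (IH y).
Qed.

(* Two neighbours of v in S, joined by a path inside S, would close a cycle through v. *)
Lemma connected_in_unique_nbr S v u u' :
  connected_in S -> v \notin S -> u \in S -> u' \in S ->
  eT u v -> eT u' v -> u' = u.
Proof.
move=> conS vS uS u'S euv eu'v; apply/eqP; apply/negPn/negP => neq.
have /connectP[p pp lp] := conS u u' uS u'S.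
case: (shortenP pp) lp => p' pp' uniq_p' _ lp.
have p'S := path_induced_all pp'.
have v_notin : v \notin u :: p'.
  rewrite inE negb_or; apply/andP; split; first by apply: contraNneq vS => ->.
  by apply: contra vS => /(allP p'S).
case: p' pp' uniq_p' p'S v_notin lp => [|w p'] pp' uniq_p' _ v_notin lp.
  by rewrite /= in lp; rewrite lp eqxx in neq.
have uniq_c : uniq (v :: u :: w :: p') by rewrite cons_uniq v_notin.
apply: (negP (acycT uniq_c isT)).
rewrite /= symT euv /= -cats1 cat_path /= andbT.
have /= /andP[-> ->] : path eT u (w :: p') by apply: sub_path pp' => a b /and3P[].
by rewrite /= in lp; rewrite -lp eu'v.
Qed.

Lemma exists_edge_out S x y :
  x \in S -> y \notin S -> connect eT x y ->
  exists u v, [/\ u \in S, v \notin S & eT u v].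
Proof.
move=> xS yS cxy.
have [/existsP[u /existsP[v /and3P[uS vS euv]]]|/existsPn no_out] :=
  boolP [exists u, exists v, [&& u \in S, v \notin S & eT u v]].
  by exists u, v.
suff : (x \in S) = (y \in S) by rewrite xS (negbTE yS).
apply: (closed_connect _ cxy) => a b eab.
have stay a' b' : eT a' b' -> a' \in S -> b' \in S.
  move=> e' a'S; apply/negPn/negP => b'S.
  by move/existsPn: (no_out a') => /(_ b'); rewrite a'S b'S e'.
by apply/idP/idP; [apply: stay eab | apply: stay; rewrite symT].
Qed.

End TreeGrowth.

Lemma colour_classesP (T : finType) (eT : rel T) (F1 F2 : {set T}) :
  colour_classes eT F1 F2 ->
  F2 = ~: F1 /\ (forall u v, eT u v -> (u \in F1) = (v \notin F1)).
Proof.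
case=> F12_0 F12_T col.
have F2E : F2 = ~: F1.
  apply/setP => x; rewrite inE; have := in_setT x; rewrite -F12_T inE.
  have := in_set0 x; rewrite -F12_0 inE.
  by case: (x \in F1); case: (x \in F2).
split=> // u v /col; rewrite F2E !inE.
by case: (u \in F1); case: (v \in F1).
Qed.

Section Embedding.
Variables (R : realFieldType) (VT : finType) (eT : rel VT) (F1 Rs : {set VT})
  (V : finType) (e : rel V) (X Y X' Y' : {set V}) (eps : R) (phi : VT -> V).
Hypotheses (symT : symmetric eT) (irrT : irreflexive eT)
  (connT : connected_graph eT) (acycT : acyclic_graph eT)
  (colT : forall u v, eT u v -> (u \in F1) = (v \notin F1))
  (RsF1 : Rs \subset F1) (se : symmetric e) (dXY : [disjoint X & Y])
  (sX' : X' \subset X) (sY' : Y' \subset Y)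
  (F1_small : #|F1|%:R <= eps * #|X|%:R) (F2_small : #|~: F1|%:R <= eps * #|Y|%:R)
  (X'_big : eps * #|X|%:R < #|X'|%:R) (Y'_big : eps * #|Y|%:R < #|Y'|%:R)
  (lowX_small : #|low_degree e X' Y' (3 * eps * #|Y|%:R)|%:R < eps * #|X|%:R)
  (lowY_small : #|low_degree e Y' X' (3 * eps * #|X|%:R)|%:R < eps * #|Y|%:R)
  (isolated_small : forall C : {set V}, C \subset Y -> eps * #|Y|%:R <= #|C|%:R ->
     #|low_degree e X C (0 : R)|%:R < eps * #|X|%:R)
  (phi_inj : {in Rs &, injective phi})
  (phi_ok : forall r, r \in Rs ->
     phi r \in X' /\ 3 * eps * #|Y|%:R < #|nbrs e Y' (phi r)|%:R).

(* The colour class b = (v \in F1) of the tree is embedded in part b, inside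
   side b, avoiding the poor vertices low b. *)
Local Notation side b := (if b then X else Y).
Local Notation part b := (if b then X' else Y').
Local Notation low b :=
  (low_degree e (part b) (part (~~ b)) (3 * eps * #|side (~~ b)|%:R)).
Local Notation target v := (part (v \in F1) :\: low (v \in F1)).

Lemma side_disjoint b y : y \in side b -> y \notin side (~~ b).
Proof. by case: b => yb; [rewrite (disjointFr dXY yb) | rewrite (disjointFl dXY yb)]. Qed.

Lemma low_small b : #|low b|%:R < eps * #|side b|%:R.
Proof. by case: b. Qed.

Lemma colour_class_small b : #|[set x | (x \in F1) == b]|%:R <= eps * #|side b|%:R.
Proof.
by case: b; [rewrite (eq_card (B := F1)) | rewrite (eq_card (B := ~: F1))] => // x;
  rewrite !inE ?eqb_id ?eqbF_neg.
Qed.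

Lemma mem_target v y : y \in target v = (y \in part (v \in F1)) &&
  (3 * eps * #|side (~~ (v \in F1))|%:R < #|nbrs e (part (~~ (v \in F1))) y|%:R).
Proof. by rewrite !inE negb_and -real_ltNge ?num_real // andb_orl andNb andbC. Qed.

Lemma target_side v y : y \in target v -> y \in side (v \in F1).
Proof.
by rewrite mem_target => /andP[+ _]; case: (v \in F1) => [/(subsetP sX')|/(subsetP sY')].
Qed.

Lemma phi_target r : r \in Rs -> phi r \in target r.
Proof. by move=> rRs; rewrite mem_target (subsetP RsF1 r rRs); case: (phi_ok rRs) => -> ->. Qed.

Implicit Types (S : {set VT}) (psi : VT -> V).

(* The reserved vertices are embedded by phi before the subtree S reaches them. *)
Definition embedding_on S psi : Prop :=
  [/\ connected_in eT S, {in S :|: Rs, forall x, psi x \in target x},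
      {in S :|: Rs &, injective psi}, {in Rs, psi =1 phi} &
      {in S &, forall u v, eT u v -> e (psi u) (psi v)}].

Local Notation used S psi b := (psi @: [set x in S :|: Rs | (x \in F1) == b]).

Lemma card_used_lt S psi v :
  v \notin S :|: Rs -> #|used S psi (v \in F1)|%:R < eps * #|side (v \in F1)|%:R.
Proof.
move=> vSR; apply: lt_le_trans (colour_class_small _); rewrite ltr_nat.
apply: leq_ltn_trans (leq_imset_card _ _) (proper_card _); apply/properP; split.
  by apply/subsetP => x; rewrite !inE => /andP[].
by exists v; rewrite !inE ?eqxx // -in_setU (negbTE vSR).
Qed.

Lemma fresh_image S psi b y :
  embedding_on S psi -> y \in side b -> y \notin used S psi b -> y \notin psi @: (S :|: Rs).
Proof.
case=> _ psi_target _ _ _ yb; apply: contra => /imsetP[x xSR yx].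
apply/imsetP; exists x => //; rewrite inE xSR /=.
have := side_disjoint yb; have := target_side (psi_target x xSR); rewrite -yx.
by case: b {yb} (x \in F1) => [] [] //= ->.
Qed.

Lemma edges_setU1 S psi u v :
  connected_in eT S -> v \notin S -> u \in S -> eT u v ->
  {in S &, forall a b, eT a b -> e (psi a) (psi b)} -> e (psi u) (psi v) ->
  {in v |: S &, forall a b, eT a b -> e (psi a) (psi b)}.
Proof.
move=> conS vS uS euv psi_edges e_uv.
have nbr_u a : a \in S -> eT a v -> a = u.
  by move=> aS eav; apply: (connected_in_unique_nbr symT acycT conS vS uS aS euv).
move=> a b /setU1P[->|aS] /setU1P[->|bS] eab.
- by rewrite irrT in eab.
- by move: eab; rewrite symT => /(nbr_u b bS) ->; rewrite se.
- by rewrite (nbr_u a aS).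
- exact: psi_edges.
Qed.

Lemma embedding_onU1 S psi u v y :
  embedding_on S psi -> u \in S -> v \notin S :|: Rs -> eT u v -> e (psi u) y ->
  y \in target v -> y \notin psi @: (S :|: Rs) ->
  embedding_on (v |: S) [eta psi with v |-> y].
Proof.
move=> [conS psi_target psi_inj psi_phi psi_edges] uS vSR euv e_uy yv y_fresh.
have [vS vRs] : v \notin S /\ v \notin Rs by move: vSR; rewrite inE negb_or => /andP.
have off_v x : x \in v |: S :|: Rs -> x != v -> x \in S :|: Rs.
  by rewrite -setUA => /setU1P[->|//]; rewrite eqxx.
split.
- exact: connected_inU1 conS uS euv.
- by move=> x /off_v /=; case: eqP => [-> //|_ /(_ isT)]; apply: psi_target.
- move=> a b /off_v aSR /off_v bSR /=.
  case: eqP => [-> | /eqP av]; case: eqP => [-> // | /eqP bv].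
  + by move=> yb; case/imsetP: y_fresh; exists b; rewrite ?bSR.
  + by move=> ay; case/imsetP: y_fresh; exists a; rewrite ?aSR.
  + exact: psi_inj (aSR av) (bSR bv).
- by move=> r rRs /=; case: eqP => [rv | _]; [rewrite -rv rRs in vRs | apply: psi_phi].
- have not_v x : x \in S -> x != v by move=> xS; apply: contraNneq vS => <-.
  apply: (edges_setU1 conS vS uS euv) => [a b aS bS|] /=.
    by rewrite (negbTE (not_v a aS)) (negbTE (not_v b bS)); apply: psi_edges.
  by rewrite eqxx (negbTE (not_v u uS)).
Qed.

Lemma embedding_onU1_reserved S psi u r :
  embedding_on S psi -> u \in S -> r \notin S -> r \in Rs -> eT u r -> e (psi u) (psi r) ->
  embedding_on (r |: S) psi.
Proof.
move=> [conS psi_target psi_inj psi_phi psi_edges] uS rS rRs eur e_ur.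
have SR : r |: S :|: Rs = S :|: Rs by rewrite -setUA (setUidPr _) // sub1set inE rRs orbT.
rewrite /embedding_on SR; split=> //; first exact: connected_inU1 conS uS eur.
exact: edges_setU1 conS rS uS eur psi_edges e_ur.
Qed.

(* psi u has more than 3 eps |side b| neighbours in part b, of which fewer than
   eps |side b| are poor and fewer than eps |side b| are already used. *)
Lemma exists_embedding_onU1 S psi u v :
  embedding_on S psi -> u \in S -> v \notin S :|: Rs -> eT u v ->
  exists psi', embedding_on (v |: S) psi'.
Proof.
move=> psi_ok uS vSR euv; set b := v \in F1.
have u_col : (u \in F1) = ~~ b by rewrite (colT euv).
have [_ psi_target _ _ _] := psi_ok.
have := psi_target u (subsetP (subsetUl S Rs) u uS).
rewrite mem_target u_col negbK => /andP[_ many_nbrs].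
have low_lt := low_small b; have used_lt := card_used_lt psi vSR.
have side_gt0 := le_lt_trans (ler0n _ _) low_lt.
have [|y y_nbr] := exists_setD (R := R) (N := nbrs e (part b) (psi u))
  (A := low b :|: used S psi b).
  by apply: lt_trans (card_setU_lt low_lt used_lt) _; rewrite -/b; lra.
rewrite in_setU negb_or => /andP[y_low y_used].
move: y_nbr; rewrite inE => /andP[y_part e_uy].
have y_fresh : y \notin psi @: (S :|: Rs).
  by apply: fresh_image psi_ok _ y_used; case: (b) y_part => [/(subsetP sX')|/(subsetP sY')].
exists [eta psi with v |-> y]; apply: embedding_onU1 psi_ok uS vSR euv e_uy _ y_fresh.
by rewrite in_setD y_low y_part.
Qed.

(* The middle vertex q of a path u - q - p - r towards a reserved vertex r must
   be mapped to a vertex with a neighbour among the candidates for p, which are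
   the fresh high-degree neighbours of psi r; by regularity this excludes fewer
   than eps |X| vertices. *)
Lemma exists_path2_images S psi u q p r :
  embedding_on S psi -> u \in S -> u \notin F1 -> q \notin S :|: Rs -> q \in F1 ->
  p \notin S :|: Rs -> p \notin F1 -> r \in Rs ->
  exists2 qq, [/\ e (psi u) qq, qq \in X' :\: low true & qq \notin used S psi true] &
  exists2 pp, [/\ e qq pp, e (psi r) pp & pp \in Y' :\: low false] &
    pp \notin used S psi false.
Proof.
move=> [_ psi_target _ _ _] uS uF1 qSR qF1 pSR pF1 rRs.
have := psi_target r (subsetP (subsetUr S Rs) r rRs).
rewrite mem_target (subsetP RsF1 r rRs) => /andP[_ r_nbrs].
have := psi_target u (subsetP (subsetUl S Rs) u uS).
rewrite mem_target (negbTE uF1) => /andP[_ u_nbrs].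
have lowY_lt := low_small false; have usedY_lt := card_used_lt psi pSR.
have lowX_lt := low_small true; have usedX_lt := card_used_lt psi qSR.
rewrite (negbTE pF1) in usedY_lt; rewrite qF1 in usedX_lt.
have [Y_ge0 X_ge0] := (le_lt_trans (ler0n _ _) lowY_lt, le_lt_trans (ler0n _ _) lowX_lt).
set C := nbrs e Y' (psi r) :\: (low false :|: used S psi false).
have C_big : eps * #|Y|%:R <= #|C|%:R.
  by apply/ltW/(card_setD_gt (card_setU_lt lowY_lt usedY_lt)); rewrite /=; lra.
have sCY : C \subset Y.
  by apply: subset_trans sY'; apply/subsetP => y; rewrite !inE => /and3P[].
have isolated_lt := isolated_small sCY C_big.
have [|qq] := exists_setD (R := R) (N := nbrs e X' (psi u))
  (A := low true :|: low_degree e X C (0 : R) :|: used S psi true).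
  by apply: lt_trans (card_setU_lt (card_setU_lt lowX_lt isolated_lt) usedX_lt) _; lra.
rewrite inE => /andP[qqX' e_uqq]; rewrite !in_setU !negb_or => /andP[/andP[qq_low qq_iso] qq_used].
exists qq; first by rewrite in_setD qq_low qqX'.
move: qq_iso; rewrite !inE (subsetP sX' qq qqX') /= -real_ltNge ?num_real // ltr0n.
case/card_gt0P => pp; rewrite !inE => /andP[/andP[pp_notin /andP[ppY' e_rpp]] e_qqpp].
move: pp_notin; rewrite negb_or => /andP[pp_low pp_used].
by exists pp; rewrite ?inE ?pp_low.
Qed.

Lemma exists_embedding_on_path2 S psi u q p r :
  embedding_on S psi -> u \in S -> q \notin S :|: Rs -> p \notin S :|: Rs ->
  r \in Rs -> r \notin S -> eT u q -> eT q p -> eT p r ->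
  exists psi', embedding_on (r |: (p |: (q |: S))) psi'.
Proof.
move=> psi_ok uS qSR pSR rRs rS euq eqp epr.
have pF1 : p \notin F1 by rewrite (colT epr) negbK (subsetP RsF1 r rRs).
have qF1 : q \in F1 by rewrite (colT eqp) pF1.
have uF1 : u \notin F1 by rewrite (colT euq) negbK.
have [qq [e_uqq qq_target qq_used] [pp [e_qqpp e_rpp pp_target] pp_used]] :=
  exists_path2_images psi_ok uS uF1 qSR qF1 pSR pF1 rRs.
have qqX : qq \in X by move: qq_target; rewrite in_setD => /andP[_ /(subsetP sX')].
have ppY : pp \in Y by move: pp_target; rewrite in_setD => /andP[_ /(subsetP sY')].
have qq_fresh := fresh_image (b := true) psi_ok qqX qq_used.
have pp_fresh := fresh_image (b := false) psi_ok ppY pp_used.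
set psi1 := [eta psi with q |-> qq].
have psi1_ok : embedding_on (q |: S) psi1.
  by apply: embedding_onU1 psi_ok uS qSR euq e_uqq _ qq_fresh; rewrite qF1.
have pp_fresh1 : pp \notin psi1 @: (q |: S :|: Rs).
  rewrite -setUA; apply: (contra (subsetP (imset_with_subset psi q qq (S :|: Rs)) pp)).
  rewrite in_setU1 negb_or pp_fresh andbT.
  by apply: contraNneq (side_disjoint (b := false) ppY) => ->.
have [qS pS] : q \notin S /\ p \notin S.
  by split; [move: qSR | move: pSR]; rewrite inE negb_or => /andP[].
have pqSR : p \notin q |: S :|: Rs.
  by rewrite -setUA in_setU1 negb_or pSR andbT; apply: contraTneq eqp => ->; rewrite irrT.
have psi2_ok : embedding_on (p |: (q |: S)) [eta psi1 with p |-> pp].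
  apply: embedding_onU1 psi1_ok (setU11 q S) pqSR eqp _ _ pp_fresh1.
    by rewrite /psi1 /= eqxx.
  by rewrite (negbTE pF1).
have [rp rq] : r != p /\ r != q.
  split; first by apply: contraTneq epr => ->; rewrite irrT.
  by apply: contraTneq rRs => ->; move: qSR; rewrite inE negb_or => /andP[].
exists [eta psi1 with p |-> pp].
apply: embedding_onU1_reserved psi2_ok (setU11 p _) _ rRs epr _.
  by rewrite !in_setU1 negb_or rp negb_or rq.
by rewrite /psi1 /= eqxx (negbTE rp) (negbTE rq) se.
Qed.

Lemma embedding_on_grow S psi :
  embedding_on S psi -> Rs \subset S -> S != set0 -> exists psi', embedding_on setT psi'.
Proof.
have [n] := ubnP #|~: S|; elim: n S psi => // n IH S psi card_lt psi_ok RsS.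
case/set0Pn => x xS.
have [S_full|] := eqVneq S setT; first by exists psi; rewrite -S_full.
rewrite -subTset => /subsetPn[y _ yS].
have [u [v [uS vS euv]]] := exists_edge_out symT xS yS (connT x y).
have vSR : v \notin S :|: Rs by rewrite (setUidPl RsS).
have [psi' psi'_ok] := exists_embedding_onU1 psi_ok uS vSR euv.
apply: IH psi'_ok _ _.
- by apply: leq_trans (card_setCU1_lt vS) _; rewrite -ltnS.
- exact: subset_trans RsS (subsetUr _ _).
- by apply/set0Pn; exists v; rewrite setU11.
Qed.

Section TwoReserved.
Variables r1 r2 : VT.
Hypotheses (Rs_sub : Rs \subset [set r1; r2]) (r2Rs : r2 \in Rs).

Definition ball2 : {set VT} :=
  [set x | [|| x == r2, eT x r2 | [exists p, eT x p && eT p r2]]].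

(* The subtree first enters ball2 at distance exactly 2 from r2, and the path
   to r2 is then embedded in one go. *)
Lemma embedding_on_grow_avoiding S psi :
  embedding_on S psi -> r1 \in S -> [disjoint S & ball2] -> exists psi', embedding_on setT psi'.
Proof.
have [n] := ubnP #|~: S|; elim: n S psi => // n IH S psi card_lt psi_ok r1S S_far.
have r2S : r2 \notin S by rewrite (disjointFl S_far) // inE eqxx.
have [u [v [uS vS euv]]] := exists_edge_out symT r1S r2S (connT r1 r2).
have u_far : u \notin ball2 by rewrite (disjointFr S_far uS).
have v_r1 : v != r1 by apply: contraNneq vS => ->.
have [v_ball|v_far] := boolP (v \in ball2).
  move: u_far v_ball; rewrite !inE => /norP[_ /norP[not_eur2 /existsPn u_far]].
  have v_r2 : v != r2 by apply: contraNneq not_eur2 => <-.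
  case/or3P=> [v_r2'|e_vr2|/existsP[p /andP[evp epr2]]]; first by rewrite v_r2' in v_r2.
    by move: (u_far v); rewrite euv e_vr2.
  have vSR : v \notin S :|: Rs.
    rewrite in_setU negb_or vS; apply: contraNN v_r1 => /(subsetP Rs_sub) /set2P[->//|].
    by move/eqP; rewrite (negbTE v_r2).
  have pSR : p \notin S :|: Rs.
    rewrite in_setU negb_or; apply/andP; split.
      by rewrite (disjointFl S_far) // inE epr2 orbT.
    apply: contraTN epr2 => /(subsetP RsF1) pF1.
    by apply/negP => /colT; rewrite pF1 (subsetP RsF1 r2 r2Rs).
  have [psi' psi'_ok] := exists_embedding_on_path2 psi_ok uS vSR pSR r2Rs r2S euv evp epr2.
  apply: embedding_on_grow psi'_ok _ _; last by apply/set0Pn; exists r2; rewrite setU11.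
  by apply: subset_trans Rs_sub _; rewrite subUset !sub1set !inE eqxx r1S !orbT.
have vSR : v \notin S :|: Rs.
  rewrite in_setU negb_or vS; apply: contraNN v_far => /(subsetP Rs_sub) /set2P[v_r1' | ->].
    by rewrite v_r1' eqxx in v_r1.
  by rewrite inE eqxx.
have [psi' psi'_ok] := exists_embedding_onU1 psi_ok uS vSR euv.
apply: IH psi'_ok _ _.
- by apply: leq_trans (card_setCU1_lt vS) _; rewrite -ltnS.
- by rewrite setU1r.
- by rewrite disjoints_subset subUset sub1set inE v_far -disjoints_subset S_far.
Qed.

End TwoReserved.

Lemma embedding_on_reserved1 r : r \in Rs -> embedding_on [set r] phi.
Proof.
move=> rRs; rewrite /embedding_on; have -> : [set r] :|: Rs = Rs by apply/setUidPr; rewrite sub1set.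
split=> //; first exact: connected_in1.
  by move=> x; apply: phi_target.
by move=> a b /set1P-> /set1P->; rewrite irrT.
Qed.

Lemma exists_embedding_on1 x : Rs = set0 -> exists psi, embedding_on [set x] psi.
Proof.
move=> Rs0.
have [|y y_part y_low] := exists_setD (R := R) (N := part (x \in F1)) (A := low (x \in F1)).
  by apply: lt_trans (low_small _) _; case: (x \in F1).
exists (fun=> y); rewrite /embedding_on Rs0 setU0; split.
- exact: connected_in1.
- by move=> z /set1P->; rewrite in_setD y_part y_low.
- by move=> a b /set1P-> /set1P->.
- by move=> r; rewrite inE.
- by move=> a b /set1P-> /set1P->; rewrite irrT.
Qed.

Hypotheses (VT_gt0 : (0 < #|VT|)%N) (Rs_le2 : (#|Rs| <= 2)%N)
  (Rs_sep : #|Rs| = 2%N -> forall r1 r2 w, r1 \in Rs -> r2 \in Rs -> r1 != r2 ->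
     ~~ (eT r1 w && eT r2 w)).

Lemma exists_embedding_on_setT : exists psi, embedding_on setT psi.
Proof.
have [Rs0|[r1 r1Rs]] := set_0Vmem Rs.
  case/card_gt0P: VT_gt0 => x _; have [psi psi_ok] := exists_embedding_on1 x Rs0.
  apply: embedding_on_grow psi_ok _ _; first by rewrite Rs0 sub0set.
  by apply/set0Pn; exists x; rewrite inE.
have phi_ok1 := embedding_on_reserved1 r1Rs.
have r1_in : [set r1] != set0 by apply/set0Pn; exists r1; rewrite inE.
have [Rs_r1|/subsetPn[r2 r2Rs r2_r1]] := boolP (Rs \subset [set r1]).
  exact: embedding_on_grow phi_ok1 Rs_r1 r1_in.
rewrite inE eq_sym in r2_r1.
have Rs_E : Rs = [set r1; r2].
  apply/eqP; rewrite eq_sym eqEcard subUset !sub1set r1Rs r2Rs cards2 r2_r1.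
  by rewrite (leq_trans Rs_le2).
apply: (embedding_on_grow_avoiding (r1 := r1) _ r2Rs phi_ok1 (set11 r1)); first by rewrite Rs_E.
rewrite disjoints_subset sub1set !inE negb_or r2_r1 /=.
have r12F1 : (r1 \in F1) && (r2 \in F1) by rewrite !(subsetP RsF1).
apply/norP; split; first by apply: contraTN r12F1 => /colT ->; rewrite andNb.
apply/existsPn => w; rewrite [eT w r2]symT.
have Rs2 : #|Rs| = 2%N by rewrite Rs_E cards2 r2_r1.
exact: Rs_sep Rs2 _ _ _ r1Rs r2Rs r2_r1.
Qed.

Lemma tree_embedding : exists psi : VT -> V,
  [/\ injective psi, {in Rs, psi =1 phi}, (forall v, psi v \in X :|: Y),
      (forall u v, eT u v -> e (psi u) (psi v)) &
      (psi @: F1 \subset X') && (psi @: (~: F1) \subset Y')].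
Proof.
have [psi [_ psi_target psi_inj psi_phi psi_edges]] := exists_embedding_on_setT.
have in_all x : x \in setT :|: Rs by rewrite inE in_setT.
exists psi; split=> //.
- by move=> a b; apply: psi_inj.
- move=> v; have := target_side (psi_target v (in_all v)).
  by case: (v \in F1); rewrite inE => ->; rewrite ?orbT.
- by move=> u v; apply: psi_edges; rewrite in_setT.
apply/andP; split; apply/subsetP => _ /imsetP[x xF ->]; move: (psi_target x (in_all x)).
  by rewrite xF in_setD => /andP[].
by rewrite inE in xF; rewrite (negbTE xF) in_setD => /andP[].
Qed.

End Embedding.

Theorem lemma2p4 (R : realFieldType)
    (VT : finType) (eT : rel VT) (F1 F2 Rs : {set VT})
    (V : finType) (e : rel V) (X Y X' Y' : {set V})
    (eps alpha : R) (phi : VT -> V) :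
  is_tree eT -> colour_classes eT F1 F2 ->
  Rs \subset F1 -> (#|Rs| <= 2)%N ->
  (#|Rs| = 2%N -> forall r1 r2 w, r1 \in Rs -> r2 \in Rs -> r1 != r2 ->
      ~~ (eT r1 w && eT r2 w)) ->
  0 < eps -> 2 * eps < alpha ->
  simple_graph e -> [disjoint X & Y] ->
  eps_regular e eps X Y -> 3 * alpha < density R e X Y ->
  #|F1|%:R <= eps * #|X|%:R -> #|F2|%:R <= eps * #|Y|%:R ->
  X' \subset X -> Y' \subset Y ->
  2 * (eps / alpha) * #|X|%:R < #|X'|%:R ->
  2 * (eps / alpha) * #|Y|%:R < #|Y'|%:R ->
  {in Rs &, injective phi} ->
  (forall r, r \in Rs ->
     phi r \in X' /\ 3 * eps * #|Y|%:R < #|[set y in Y' | e (phi r) y]|%:R) ->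
  exists psi : VT -> V,
    [/\ injective psi, {in Rs, psi =1 phi},
        (forall v, psi v \in X :|: Y),
        (forall u v, eT u v -> e (psi u) (psi v)) &
        (psi @: F1 \subset X') && (psi @: F2 \subset Y')].
Proof.
move=> [[symT irrT] VT_gt0 connT acycT] /colour_classesP[-> colT] RsF1 Rs_le2 Rs_sep
  eps_gt0 alpha_gt [se _] dXY reg dens F1_small F2_small sX' sY' X'_big Y'_big.
have d_le1 : density R e X Y <= 1 := density_le1 _ _ _ _.
have alpha_bounds : 0 < alpha <= 2 by apply/andP; split; lra.
have X'_gt := eps_mul_lt_of_ratio eps_gt0 alpha_bounds (ler0n _ _) X'_big.
have Y'_gt := eps_mul_lt_of_ratio eps_gt0 alpha_bounds (ler0n _ _) Y'_big.
have X_gt0 := card_gt0_of_lt (ltW eps_gt0) sX' X'_gt.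
have Y_gt0 := card_gt0_of_lt (ltW eps_gt0) sY' Y'_gt.
have regYX := eps_regular_sym se reg.
have densYX : 3 * alpha < density R e Y X by rewrite densityC.
have lowX_lt := card_low_degree_dense_lt eps_gt0 reg alpha_gt dens X_gt0 sX' sY' Y'_big.
have lowY_lt := card_low_degree_dense_lt eps_gt0 regYX alpha_gt densYX Y_gt0 sY' sX' X'_big.
have eps_lt_d : eps < density R e X Y by lra.
move=> phi_inj phi_ok; apply: (tree_embedding (eps := eps)) => // C.
exact: card_isolated_lt.
Qed.
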